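(* The Diophantine equation $(2x)^6 - 1 = p^2 q^2 a^3$ has no solution with $x, a$ integers and $p, q$ primes. *)

From Stdlib Require Export ZArith Znumtheory.

From Stdlib Require Import ZArith Znumtheory Lia Psatz Classical.

(* With [y = 2x], [y^6 - 1 = (y^3 - 1)(y^3 + 1)] is a product of two coprime factors,
   so by unique factorisation each factor is a cube times [1], [p^2] or [q^2].  If one
   of them is a cube, [y^3 ± 1 = d^3] forces [|y| <= 1].  Otherwise (choosing the sign
   of [y] so that [3] does not divide [y + 1]) the factorisations
   [y^3 + 1 = (y + 1)(y^2 - y + 1)] and, when [3 | y], [y^3 - 1 = (y - 1)(y^2 + y + 1)]
   have coprime factors, one of which must be a cube; every resulting equation puts a
   cube strictly between two consecutive cubes.  When [y = 3k + 1] the prime [3] is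
   extracted from [y^3 - 1 = 9 k (3k^2 + 3k + 1)] and one is left with the equations
   [X^3 + (1 - X)^3 = b^3], [v^3 + w^3 = 3 u^3] and [y - 1 = 9 a^3, y^2 - y + 1 = g^3],
   which are settled in the Eisenstein integers Z[omega] by Euler's descent:
   [xi^3 + eta^3 = eps lam^m g^3] (with [lam = 1 - omega], [eps] a unit, [xi], [eta],
   [g] prime to [lam], [xi], [eta] coprime, [m >= 1], [m <> 1 mod 3]) is impossible,
   because [lam^4] divides the left side and
   [xi^3 + eta^3 = lam^3 A (A - eta)(A + omega^2 eta)] with [xi + eta = lam A] yields
   a solution with exponent [m - 3]. *)

(** * Coprime factors of a cube *)

Section CoprimeCubeFactor.

Local Set Implicit Arguments.
Local Unset Strict Implicit.

Variables (R : Type) (rO rI : R) (radd rmul rsub : R -> R -> R) (ropp : R -> R).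
Hypothesis Rth : ring_theory rO rI radd rmul rsub ropp (@eq R).
Add Ring Rring : Rth.

Declare Scope ring_el_scope.
Local Infix "+" := radd : ring_el_scope.
Local Infix "*" := rmul : ring_el_scope.
Local Open Scope ring_el_scope.

Definition divides (d x : R) : Prop := exists k, x = d * k.
Definition is_unit (u : R) : Prop := exists v, u * v = rI.
Definition coprime (x y : R) : Prop := exists u v, u * x + v * y = rI.
Definition prime_element (p : R) : Prop :=
  ~ is_unit p /\ forall a b, divides p (a * b) -> divides p a \/ divides p b.

Lemma divides_add d x y : divides d x -> divides d y -> divides d (x + y).
Proof. intros [k ->] [l ->]. exists (k + l). ring. Qed.

Lemma divides_sub d x y : divides d x -> divides d y -> divides d (rsub x y).
Proof. intros [k ->] [l ->]. exists (rsub k l). ring. Qed.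

Lemma divides_mull d x y : divides d x -> divides d (y * x).
Proof. intros [k ->]. exists (y * k). ring. Qed.

Lemma divides_mulr d x y : divides d x -> divides d (x * y).
Proof. intros [k ->]. exists (k * y). ring. Qed.

Lemma coprime_sym x y : coprime x y -> coprime y x.
Proof. intros [u [v H]]. exists v, u. rewrite <- H. ring. Qed.

Lemma coprime_mulr a b c : coprime a b -> coprime a c -> coprime a (b * c).
Proof.
  intros [u [v H]] [u' [v' H']].
  exists (u * u' * a + u * v' * c + v * b * u'), (v * v').
  transitivity ((u * a + v * b) * (u' * a + v' * c)); [ring | rewrite H, H'; ring].
Qed.

Lemma coprime_is_unit_r x u : is_unit u -> coprime x u.
Proof. intros [v Hv]. exists rO, v. rewrite <- Hv. ring. Qed.

Lemma coprime_divides_is_unit a b d : coprime a b -> divides d a -> divides d b -> is_unit d.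
Proof. intros [u [v H]] [k ->] [l ->]. exists (u * k + v * l). rewrite <- H. ring. Qed.

Lemma gauss a b c : coprime a b -> divides a (b * c) -> divides a c.
Proof.
  intros [u [v H]] [k Hk]. exists (u * c + v * k).
  transitivity ((u * a + v * b) * c); [rewrite H; ring |].
  transitivity (u * a * c + v * (b * c)); [ring | rewrite Hk; ring].
Qed.

Lemma is_unit_mul u v : is_unit u -> is_unit v -> is_unit (u * v).
Proof.
  intros [u' Hu] [v' Hv]. exists (u' * v').
  transitivity ((u * u') * (v * v')); [ring | rewrite Hu, Hv; ring].
Qed.

Hypothesis mul_integral : forall x y, x * y = rO -> x = rO \/ y = rO.

Lemma mul_cancel_l a x y : a <> rO -> a * x = a * y -> x = y.
Proof.
  intros Ha H.
  assert (Hd : a * (x + ropp y) = rO).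
  { transitivity (a * x + ropp (a * y)); [ring | rewrite H; ring]. }
  destruct (mul_integral Hd) as [| Hxy]; [contradiction |].
  transitivity (x + ropp y + y); [ring | rewrite Hxy; ring].
Qed.

Lemma prime_element_cancel p a b c : prime_element p -> p <> rO -> ~ divides p b ->
  a * b = p * c -> exists a', a = p * a' /\ a' * b = c.
Proof.
  intros [_ Hp] Hp0 Hpb H.
  destruct (Hp a b) as [[a' Ha'] | ]; [exists c; auto | | contradiction].
  exists a'. split; [exact Ha' |].
  apply (@mul_cancel_l p); [exact Hp0 |]. rewrite <- H, Ha'. ring.
Qed.

Lemma coprime_cube_strip_prime p z a b : prime_element p -> p <> rO -> ~ divides p b ->
  coprime a b -> a * b = (p * z) * (p * z) * (p * z) ->
  exists a', a = p * p * p * a' /\ a' * b = z * z * z /\ coprime a' b.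
Proof.
  intros Hp Hp0 Hpb [u [v Huv]] Heq.
  destruct (@prime_element_cancel p a b (p * p * (z * z * z))) as [a1 [-> H1]]; auto.
  { rewrite Heq. ring. }
  destruct (@prime_element_cancel p a1 b (p * (z * z * z))) as [a2 [-> H2]]; auto.
  { rewrite H1. ring. }
  destruct (@prime_element_cancel p a2 b (z * z * z)) as [a3 [-> H3]]; auto.
  exists a3. split; [ring | split; [exact H3 |]].
  exists (u * (p * p * p)), v. rewrite <- Huv. ring.
Qed.

Variable size : R -> nat.
Hypothesis prime_factor : forall z, z <> rO -> ~ is_unit z ->
  exists p z', prime_element p /\ z = p * z' /\ (size z' < size z)%nat.

Lemma coprime_cube_factor z x y : coprime x y -> x * y = z * z * z ->
  exists u t, is_unit u /\ x = u * (t * t * t).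
Proof.
  revert x y. induction z as [z IH] using (well_founded_induction (well_founded_ltof _ size)).
  intros x y Hxy Heq.
  destruct (classic (z = rO)) as [-> | Hz0].
  { assert (Hxy0 : x * y = rO) by (rewrite Heq; ring).
    destruct (mul_integral Hxy0) as [-> | ->].
    - exists rI, rO. split; [exists rI; ring | ring].
    - destruct Hxy as [u [v Huv]]. exists x, rI.
      split; [exists u; rewrite <- Huv; ring | ring]. }
  destruct (classic (is_unit z)) as [[zi Hzi] | Hzu].
  { exists x, rI. split; [| ring]. exists (y * zi * zi * zi).
    transitivity (x * y * zi * zi * zi); [ring |]. rewrite Heq.
    transitivity ((z * zi) * (z * zi) * (z * zi)); [ring | rewrite Hzi; ring]. }
  destruct (prime_factor Hz0 Hzu) as [p [z' [Hp [-> Hsize]]]].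
  assert (Hp0 : p <> rO) by (intros ->; apply Hz0; ring).
  destruct (classic (divides p y)) as [Hpy | Hpy].
  - assert (Hpx : ~ divides p x).
    { intro Hpx. apply (proj1 Hp). eapply coprime_divides_is_unit; eauto. }
    destruct (@coprime_cube_strip_prime p z' y x) as [y' [-> [Hy' Hc]]]; auto.
    { apply coprime_sym; exact Hxy. }
    { rewrite <- Heq. ring. }
    apply (IH z' Hsize x y'); [apply coprime_sym; exact Hc | rewrite <- Hy'; ring].
  - destruct (@coprime_cube_strip_prime p z' x y) as [x' [-> [Hx' Hc]]]; auto.
    destruct (IH z' Hsize x' y Hc Hx') as [u [t [Hu ->]]].
    exists u, (p * t). split; [exact Hu | ring].
Qed.

End CoprimeCubeFactor.

Open Scope Z_scope.

(** * The Eisenstein integers *)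

(* The pair [(a, b)] stands for [a + b omega], with [omega^2 = -1 - omega]. *)
Definition eis := (Z * Z)%type.
Definition e0 : eis := (0, 0).
Definition e1 : eis := (1, 0).
Definition eadd (x y : eis) : eis := (fst x + fst y, snd x + snd y).
Definition emul (x y : eis) : eis :=
  (fst x * fst y - snd x * snd y, fst x * snd y + snd x * fst y - snd x * snd y).
Definition eopp (x : eis) : eis := (- fst x, - snd x).
Definition esub (x y : eis) : eis := eadd x (eopp y).

Lemma eis_ring_theory : ring_theory e0 e1 eadd emul esub eopp (@eq eis).
Proof.
  constructor; intros; repeat match goal with x : eis |- _ => destruct x end;
    cbv [eadd emul eopp esub e0 e1 fst snd]; f_equal; ring.
Qed.
Add Ring eis_ring : eis_ring_theory.

Declare Scope eis_scope.
Delimit Scope eis_scope with E.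
Infix "+" := eadd : eis_scope.
Infix "*" := emul : eis_scope.
Infix "-" := esub : eis_scope.
Notation "- x" := (eopp x) : eis_scope.

Definition omega : eis := (0, 1).
Definition lam : eis := (1, -1).
Definition ofZ (n : Z) : eis := (n, 0).
Definition enorm (x : eis) : Z := fst x * fst x - fst x * snd x + snd x * snd x.
Definition econj (x : eis) : eis := (fst x - snd x, - snd x).

Fixpoint epow (x : eis) (n : nat) : eis :=
  match n with O => e1 | S n => emul x (epow x n) end.

Notation edivides := (divides emul).
Notation eunit := (is_unit e1 emul).
Notation ecoprime := (coprime e1 eadd emul).

Ltac eis_compute :=
  repeat match goal with x : eis |- _ => destruct x end;
  cbv [emul eadd eopp esub e0 e1 omega lam ofZ econj enorm fst snd]; f_equal; ring.

Open Scope eis_scope.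

Lemma enorm_mul x y : enorm (x * y) = (enorm x * enorm y)%Z.
Proof. destruct x, y; cbv [enorm emul fst snd]; ring. Qed.

Lemma enorm_econj x : enorm (econj x) = enorm x.
Proof. destruct x; cbv [enorm econj fst snd]; ring. Qed.

Lemma mul_econj x : x * econj x = ofZ (enorm x).
Proof. eis_compute. Qed.

Lemma enorm_sum_squares x : (4 * enorm x = (2 * fst x - snd x) ^ 2 + 3 * snd x ^ 2)%Z.
Proof. destruct x; cbv [enorm fst snd]; ring. Qed.

Lemma enorm_ge0 x : (0 <= enorm x)%Z.
Proof. pose proof (enorm_sum_squares x). nia. Qed.

Lemma enorm_eq0 x : enorm x = 0%Z -> x = e0.
Proof.
  intros H. pose proof (enorm_sum_squares x) as Hs. rewrite H in Hs.
  destruct x as [a b]; cbn [fst snd] in Hs.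
  assert (b = 0)%Z by nia. assert (a = 0)%Z by nia. subst. reflexivity.
Qed.

Lemma enorm_gt0 x : x <> e0 -> (0 < enorm x)%Z.
Proof.
  intros Hx. pose proof (enorm_ge0 x).
  destruct (Z.eq_dec (enorm x) 0) as [H0 |]; [apply enorm_eq0 in H0; contradiction | lia].
Qed.

Lemma eintegral x y : x * y = e0 -> x = e0 \/ y = e0.
Proof.
  intros H. assert (Hn : enorm (x * y) = 0%Z) by (rewrite H; reflexivity).
  rewrite enorm_mul in Hn. apply Z.mul_eq_0 in Hn.
  destruct Hn; [left | right]; now apply enorm_eq0.
Qed.

Lemma emul_neq0 x y : x <> e0 -> y <> e0 -> x * y <> e0.
Proof. intros Hx Hy H. destruct (eintegral _ _ H); contradiction. Qed.

Lemma ecancel a x y : a <> e0 -> a * x = a * y -> x = y.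
Proof. apply (mul_cancel_l eis_ring_theory eintegral). Qed.

Lemma edivides_enorm d x : edivides d x -> (enorm d | enorm x)%Z.
Proof. intros [k ->]. rewrite enorm_mul. exists (enorm k). ring. Qed.

Lemma eunit_enorm u : eunit u <-> enorm u = 1%Z.
Proof.
  split.
  - intros [v Hv]. assert (Hn : enorm (u * v) = 1%Z) by (rewrite Hv; reflexivity).
    rewrite enorm_mul in Hn. exact (proj1 (Z.eq_mul_1_nonneg _ _ (enorm_ge0 u) Hn)).
  - intros H. exists (econj u). rewrite mul_econj, H. reflexivity.
Qed.

Lemma eunit_cases u : eunit u ->
  u = (1, 0)%Z \/ u = (-1, 0)%Z \/ u = (0, 1)%Z \/ u = (0, -1)%Z \/
  u = (1, 1)%Z \/ u = (-1, -1)%Z.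
Proof.
  intros Hu. apply eunit_enorm in Hu. pose proof (enorm_sum_squares u) as Hs.
  rewrite Hu in Hs. destruct u as [a b]. cbv [enorm fst snd] in Hu, Hs.
  assert (Hb : (-1 <= b <= 1)%Z) by nia. assert (Ha : (-2 <= a <= 2)%Z) by nia.
  assert (Hb' : b = 0%Z \/ b = 1%Z \/ b = (-1)%Z) by lia.
  assert (Ha' : a = 0%Z \/ a = 1%Z \/ a = (-1)%Z \/ a = 2%Z \/ a = (-2)%Z) by lia.
  destruct Hb' as [-> | [-> | ->]];
    destruct Ha' as [-> | [-> | [-> | [-> | ->]]]]; try lia; auto 10.
Qed.

Lemma Z_round_div e n : (0 < n)%Z -> exists q, (- n <= 2 * (e - q * n) <= n)%Z.
Proof.
  intros Hn. exists ((2 * e + n) / (2 * n))%Z.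
  pose proof (Z.div_mod (2 * e + n) (2 * n) ltac:(lia)).
  pose proof (Z.mod_pos_bound (2 * e + n) (2 * n) ltac:(lia)). nia.
Qed.

(* Divide [x * econj d] by [enorm d] coordinatewise with rounding. *)
Lemma ediv x d : d <> e0 -> exists q r, x = q * d + r /\ (enorm r < enorm d)%Z.
Proof.
  intros Hd. pose proof (enorm_gt0 d Hd) as Hn. set (n := enorm d) in *.
  destruct (x * econj d) as [e f] eqn:He.
  destruct (Z_round_div e n Hn) as [q1 Hq1]. destruct (Z_round_div f n Hn) as [q2 Hq2].
  exists (q1, q2), (x - (q1, q2) * d). split; [ring |].
  set (r := x - (q1, q2) * d).
  assert (Hr : r * econj d = (e - q1 * n, f - q2 * n)%Z).
  { transitivity (x * econj d - (q1, q2) * (d * econj d)); [unfold r; ring |].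
    rewrite He, mul_econj. fold n. eis_compute. }
  assert (HN : (enorm r * n = enorm (e - q1 * n, f - q2 * n))%Z).
  { rewrite <- Hr, enorm_mul, enorm_econj. reflexivity. }
  pose proof (enorm_ge0 r).
  cbv [enorm fst snd] in HN |- *. nia.
Qed.

Lemma ebezout x y : exists g, edivides g x /\ edivides g y /\ exists u v, g = u * x + v * y.
Proof.
  revert x. induction y as [y IH] using (well_founded_induction
    (well_founded_ltof _ (fun y => Z.to_nat (enorm y)))).
  intros x. destruct (classic (y = e0)) as [-> | Hy].
  - exists x. split; [exists e1; ring |]. split; [exists e0; ring |]. exists e1, e0. ring.
  - destruct (ediv x y Hy) as [q [r [-> Hr]]]. pose proof (enorm_ge0 r).
    destruct (IH r ltac:(unfold ltof; lia) y) as [g [[k Hk] [[l Hl] [u [v Huv]]]]].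
    exists g. split; [| split; [exists k; exact Hk |]].
    + exists (q * k + l). rewrite Hk at 1. rewrite Hl. ring.
    + exists v, (u - v * q). rewrite Huv. ring.
Qed.

Definition eirreducible (p : eis) : Prop :=
  (1 < enorm p)%Z /\ forall d, edivides d p -> enorm d = 1%Z \/ enorm d = enorm p.

Lemma eirreducible_coprime p a : eirreducible p -> ~ edivides p a -> ecoprime p a.
Proof.
  intros [Hp1 Hp] Hpa. destruct (ebezout p a) as [g [Hgp [Hga [u [v Huv]]]]].
  destruct (Hp g Hgp) as [Hg | Hg].
  - apply eunit_enorm in Hg. destruct Hg as [gi Hgi].
    exists (gi * u), (gi * v). rewrite <- Hgi, Huv. ring.
  - exfalso. apply Hpa. destruct Hgp as [h Hh].
    assert (Hh1 : enorm h = 1%Z).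
    { rewrite Hh, enorm_mul in Hg, Hp1. nia. }
    apply eunit_enorm in Hh1. destruct Hh1 as [hi Hhi]. destruct Hga as [k ->].
    exists (hi * k). rewrite Hh.
    transitivity (g * (h * hi) * k); [rewrite Hhi |]; ring.
Qed.

Lemma eirreducible_prime p : eirreducible p -> prime_element e1 emul p.
Proof.
  intros Hp. split.
  - intros Hu. apply eunit_enorm in Hu. destruct Hp. lia.
  - intros a b Hab. destruct (classic (edivides p a)) as [| Ha]; [left; assumption | right].
    apply (gauss eis_ring_theory (eirreducible_coprime p a Hp Ha) Hab).
Qed.

Lemma eirreducible_factor z : (1 < enorm z)%Z -> exists p, eirreducible p /\ edivides p z.
Proof.
  induction z as [z IH] using (well_founded_induction
    (well_founded_ltof _ (fun z => Z.to_nat (enorm z)))).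
  intros Hz. destruct (classic (eirreducible z)) as [Hi | Hi].
  { exists z. split; [exact Hi | exists e1; ring]. }
  assert (exists d, edivides d z /\ enorm d <> 1%Z /\ enorm d <> enorm z)
    as [d [[k Hk] [Hd1 Hdz]]].
  { apply NNPP. intro Hc. apply Hi. split; [exact Hz |]. intros d Hd.
    destruct (Z.eq_dec (enorm d) 1); [left; assumption |].
    destruct (Z.eq_dec (enorm d) (enorm z)); [right; assumption |].
    exfalso. apply Hc. exists d. auto. }
  assert (HN : enorm z = (enorm d * enorm k)%Z) by (rewrite Hk; apply enorm_mul).
  pose proof (enorm_ge0 d). pose proof (enorm_ge0 k).
  assert (enorm k <> 1%Z) by (intro Hk1; rewrite Hk1 in HN; lia).
  destruct (IH d ltac:(unfold ltof; nia) ltac:(nia)) as [p [Hp Hpd]].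
  exists p. split; [exact Hp |]. destruct Hpd as [l ->]. exists (l * k). rewrite Hk. ring.
Qed.

Lemma eprime_factor z : z <> e0 -> ~ eunit z ->
  exists p z', prime_element e1 emul p /\ z = p * z' /\
    (Z.to_nat (enorm z') < Z.to_nat (enorm z))%nat.
Proof.
  intros Hz0 Hzu.
  assert (Hz1 : (1 < enorm z)%Z).
  { pose proof (enorm_gt0 z Hz0). rewrite eunit_enorm in Hzu. lia. }
  destruct (eirreducible_factor z Hz1) as [p [Hp [z' Hz']]].
  exists p, z'. split; [apply eirreducible_prime; exact Hp | split; [exact Hz' |]].
  assert (Hz'0 : z' <> e0) by (intros ->; apply Hz0; rewrite Hz'; ring).
  pose proof (enorm_gt0 z' Hz'0). destruct Hp as [Hp1 _].
  rewrite Hz', enorm_mul. nia.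
Qed.

Lemma ecoprime_cube_factor z x y : ecoprime x y -> x * y = z * z * z ->
  exists u t, eunit u /\ x = u * (t * t * t).
Proof. apply (coprime_cube_factor eis_ring_theory eintegral eprime_factor). Qed.

Notation edivides_add := (divides_add eis_ring_theory).
Notation edivides_sub := (divides_sub eis_ring_theory).
Notation edivides_mull := (divides_mull eis_ring_theory).
Notation edivides_mulr := (divides_mulr eis_ring_theory).
Notation ecoprime_sym := (coprime_sym eis_ring_theory).
Notation ecoprime_mulr := (coprime_mulr eis_ring_theory).
Notation eunit_mul := (is_unit_mul eis_ring_theory).

(** * Euler's descent in Z[omega] *)

Lemma epow_add x a b : epow x (a + b) = epow x a * epow x b.
Proof. induction a as [| a IH]; simpl; [ring | rewrite IH; ring]. Qed.

Lemma epow_neq0 x n : x <> e0 -> epow x n <> e0.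
Proof. intros Hx. induction n as [| n IH]; [discriminate | apply emul_neq0; assumption]. Qed.

Lemma three_lam2 : ofZ 3 = (e1 + omega) * lam * lam.
Proof. reflexivity. Qed.

Lemma eunit_1_omega : eunit (e1 + omega).
Proof. apply eunit_enorm. reflexivity. Qed.

Lemma lam_prime : prime_element e1 emul lam.
Proof.
  apply eirreducible_prime. split; [reflexivity |].
  intros d Hd. apply edivides_enorm in Hd. change (enorm lam) with 3%Z in *.
  pose proof (enorm_ge0 d). assert (enorm d <= 3)%Z by (apply Z.divide_pos_le; [lia | exact Hd]).
  destruct Hd as [k Hk].
  assert (enorm d <> 0 /\ enorm d <> 2)%Z as [] by (split; intros Hd; rewrite Hd in Hk; lia).
  lia.
Qed.

Lemma lam_not_divides_unit u : eunit u -> ~ edivides lam u.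
Proof.
  intros Hu Hl. apply edivides_enorm in Hl. apply eunit_enorm in Hu.
  rewrite Hu in Hl. destruct Hl as [k Hk]. change (enorm lam) with 3%Z in Hk. lia.
Qed.

Lemma lam_not_divides_mul a b : ~ edivides lam a -> ~ edivides lam b -> ~ edivides lam (a * b).
Proof. intros Ha Hb Hab. destruct (proj2 lam_prime a b Hab); contradiction. Qed.

Lemma lam_not_divides_cube a : ~ edivides lam a -> ~ edivides lam (a * a * a).
Proof. intros Ha. repeat apply lam_not_divides_mul; assumption. Qed.

Lemma lam_divides_ofZ n : edivides lam (ofZ n) <-> (3 | n)%Z.
Proof.
  split.
  - intros Hl. apply edivides_enorm in Hl. change (enorm lam) with 3%Z in Hl.
    unfold enorm, ofZ in Hl; cbn [fst snd] in Hl.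
    replace (n * n - n * 0 + 0 * 0)%Z with (n * n)%Z in Hl by ring.
    destruct (prime_mult 3 prime_3 n n Hl); assumption.
  - intros [k ->]. exists ((e1 + omega) * lam * ofZ k). eis_compute.
Qed.

(* [omega = 1 - lam], so [a + b omega] is congruent to the integer [a + b] mod [lam]. *)
Lemma lam_residues x : edivides lam x \/ edivides lam (x - e1) \/ edivides lam (x + e1).
Proof.
  destruct x as [a b].
  assert (Hr : forall r, ((a + b - r) mod 3 = 0)%Z -> edivides lam ((a, b) - ofZ r)).
  { intros r Hr. apply Z.mod_divide in Hr; [| lia]. destruct Hr as [s Hs].
    exists (2 * s - b, s)%Z. cbv [emul esub eadd eopp lam ofZ fst snd]. f_equal; lia. }
  pose proof (Z.mod_pos_bound (a + b) 3 ltac:(lia)).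
  assert (Hm : ((a + b) mod 3 = 0 \/ (a + b) mod 3 = 1 \/ (a + b) mod 3 = 2)%Z) by lia.
  destruct Hm as [Hm | [Hm | Hm]].
  - left. replace (a, b) with ((a, b) - ofZ 0) by eis_compute.
    apply Hr. rewrite Zminus_mod, Hm. reflexivity.
  - right; left. apply Hr. rewrite Zminus_mod, Hm. reflexivity.
  - right; right. replace ((a, b) + e1) with ((a, b) - ofZ (-1)) by eis_compute.
    apply Hr. rewrite Zminus_mod, Hm. reflexivity.
Qed.

Definition is_sign (s : eis) : Prop := s = e1 \/ s = - e1.

(* With [x = s + lam t], [x^3 - s = lam^3 (t^3 - t + lam (...))], and [lam] divides
   [t^3 - t = (t - 1) t (t + 1)] since every residue mod [lam] is [0] or [±1]. *)
Lemma cube_mod_lam4 x : ~ edivides lam x ->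
  exists s, is_sign s /\ edivides lam (x - s) /\ edivides (epow lam 4) (x * x * x - s).
Proof.
  intros Hx.
  assert (Hcube : forall s t, is_sign s -> x = s + lam * t ->
            edivides (epow lam 4) (x * x * x - s)).
  { intros s t Hs ->.
    assert (Ht : edivides lam (t * t * t - t)).
    { destruct (lam_residues t) as [H | [H | H]].
      - replace (t * t * t - t) with (t * (t * t - e1)) by ring. apply edivides_mulr, H.
      - replace (t * t * t - t) with ((t - e1) * (t * t + t)) by ring. apply edivides_mulr, H.
      - replace (t * t * t - t) with ((t + e1) * (t * t - t)) by ring. apply edivides_mulr, H. }
    destruct Ht as [q Hq].
    exists (q + (e1 + omega) * t + (e1 + omega) * s * t * t).
    assert (Hid : (s + lam * t) * (s + lam * t) * (s + lam * t) - s =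
      lam * lam * lam * (t * t * t - t + lam * (e1 + omega) * t
                         + (e1 + omega) * s * lam * t * t)).
    { destruct Hs as [-> | ->]; eis_compute. }
    rewrite Hid, Hq. simpl. ring. }
  destruct (lam_residues x) as [H | [[t Ht] | [t Ht]]]; [contradiction | |].
  - exists e1. split; [left; reflexivity | split; [exists t; exact Ht |]].
    apply (Hcube e1 t); [left; reflexivity | rewrite <- Ht; ring].
  - exists (- e1). split; [right; reflexivity | split; [exists t; rewrite <- Ht; ring |]].
    apply (Hcube (- e1) t); [right; reflexivity | rewrite <- Ht; ring].
Qed.

Lemma lam_valuation x : x <> e0 -> exists j x', x = epow lam j * x' /\ ~ edivides lam x'.
Proof.
  induction x as [x IH] using (well_founded_induction
    (well_founded_ltof _ (fun x => Z.to_nat (enorm x)))).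
  intros Hx. destruct (classic (edivides lam x)) as [[y Hy] | Hnx].
  - assert (Hy0 : y <> e0) by (intros ->; apply Hx; rewrite Hy; ring).
    pose proof (enorm_gt0 y Hy0).
    assert (enorm x = 3 * enorm y)%Z by (rewrite Hy, enorm_mul; reflexivity).
    destruct (IH y ltac:(unfold ltof; lia) Hy0) as [j [x' [Hx' Hnx']]].
    exists (S j), x'. split; [rewrite Hy, Hx'; simpl; ring | exact Hnx'].
  - exists O, x. split; [simpl; ring | exact Hnx].
Qed.

Lemma lam_valuation_lt j k x y : (j < k)%nat -> ~ edivides lam x ->
  epow lam j * x <> epow lam k * y.
Proof.
  intros Hjk Hx H. apply Hx. exists (epow lam (k - S j) * y).
  apply (ecancel (epow lam j)); [apply epow_neq0; discriminate |].
  rewrite H. replace k with (j + S (k - S j))%nat at 1 by lia.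
  rewrite epow_add. simpl. ring.
Qed.

Lemma lam_valuation_unique j k x y : ~ edivides lam x -> ~ edivides lam y ->
  epow lam j * x = epow lam k * y -> j = k /\ x = y.
Proof.
  intros Hx Hy H. destruct (Nat.lt_trichotomy j k) as [Hl | [-> | Hl]].
  - exfalso. exact (lam_valuation_lt j k x y Hl Hx H).
  - split; [reflexivity |]. apply (ecancel (epow lam k)); [apply epow_neq0; discriminate | exact H].
  - exfalso. exact (lam_valuation_lt k j y x Hl Hy (eq_sym H)).
Qed.

Lemma lam_divides_epow k : (1 <= k)%nat -> edivides lam (epow lam k).
Proof. intros Hk. destruct k as [| k]; [lia |]. exists (epow lam k). reflexivity. Qed.

Lemma lam2_divides_epow k : (2 <= k)%nat -> edivides (lam * lam) (epow lam k).
Proof. intros Hk. destruct k as [| [| k]]; [lia | lia |]. exists (epow lam k). simpl. ring. Qed.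

Lemma sign_sum_not_lam s : is_sign s -> ~ edivides lam (s + s).
Proof.
  intros Hs H. apply edivides_enorm in H. destruct H as [q Hq].
  destruct Hs as [-> | ->]; cbv [enorm eadd eopp e1 lam fst snd] in Hq; lia.
Qed.

Lemma eunit_sign_of_lam2 e s1 s2 : eunit e -> is_sign s1 -> is_sign s2 ->
  edivides (lam * lam) (s1 + e * s2) -> is_sign e.
Proof.
  intros He Hs1 Hs2 H. unfold is_sign.
  destruct (eunit_cases e He) as [-> | [-> | [-> | [-> | [-> | ->]]]]];
    destruct Hs1 as [-> | ->]; destruct Hs2 as [-> | ->];
    try (left; reflexivity); try (right; reflexivity);
    apply edivides_enorm in H; destruct H as [q Hq];
    cbv [enorm emul eadd eopp esub e1 lam fst snd] in Hq; lia.
Qed.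

Definition lam_cube_sum (m : nat) (xi eta g : eis) : Prop :=
  ~ edivides lam xi /\ ~ edivides lam eta /\ ~ edivides lam g /\ ecoprime xi eta /\
  exists eps, eunit eps /\ xi * xi * xi + eta * eta * eta = eps * epow lam m * (g * g * g).

Definition lam_triple (k : nat) (A B C : eis) : Prop :=
  ecoprime A B /\ ecoprime B C /\ ecoprime C A /\ A + omega * B + omega * omega * C = e0 /\
  exists eps g, eunit eps /\ ~ edivides lam g /\ A * B * C = eps * epow lam k * (g * g * g).

Lemma lam_triple_rotate k A B C : lam_triple k A B C -> lam_triple k B C A.
Proof.
  intros [HAB [HBC [HCA [Hrel [eps [g [Heps [Hg Hprod]]]]]]]].
  split; [exact HBC | split; [exact HCA | split; [exact HAB | split]]].
  - transitivity (omega * omega * (A + omega * B + omega * omega * C)); [eis_compute |].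
    rewrite Hrel. ring.
  - exists eps, g. split; [exact Heps | split; [exact Hg | rewrite <- Hprod; ring]].
Qed.

Lemma ecoprime_of_combination x y X Y a b c d :
  ecoprime x y -> x = a * X + b * Y -> y = c * X + d * Y -> ecoprime X Y.
Proof.
  intros [u [v H]] -> ->. exists (u * a + v * c), (u * b + v * d). rewrite <- H. ring.
Qed.

Lemma ecoprime_unit_cube_factor x y z g eps : eunit eps -> ecoprime x y -> ecoprime x z ->
  x * y * z = eps * (g * g * g) -> exists u t, eunit u /\ x = u * (t * t * t).
Proof.
  intros [ei Hei] Hxy Hxz Hprod.
  apply (ecoprime_cube_factor g x (y * z * ei)).
  - apply ecoprime_mulr; [apply ecoprime_mulr; assumption |].
    apply (coprime_is_unit_r eis_ring_theory). exists eps. rewrite <- Hei. ring.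
  - transitivity (x * y * z * ei); [ring |]. rewrite Hprod.
    transitivity ((eps * ei) * (g * g * g)); [ring | rewrite Hei; ring].
Qed.

Lemma lam_triple_cube_form k A B C : lam_triple k A B C -> edivides lam A ->
  exists ea eb ec r s t, eunit ea /\ eunit eb /\ eunit ec /\
    ~ edivides lam r /\ ~ edivides lam s /\ ~ edivides lam t /\ ecoprime s t /\
    A = epow lam k * (ea * (r * r * r)) /\ B = eb * (s * s * s) /\ C = ec * (t * t * t).
Proof.
  intros [HAB [HBC [HCA [_ [eps [g [Heps [Hg Hprod]]]]]]]] HA.
  assert (HB : ~ edivides lam B).
  { intros HB. apply (proj1 lam_prime). exact (coprime_divides_is_unit eis_ring_theory HAB HA HB). }
  assert (HC : ~ edivides lam C).
  { intros HC. apply (proj1 lam_prime).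
    exact (coprime_divides_is_unit eis_ring_theory (ecoprime_sym HCA) HA HC). }
  assert (HA0 : A <> e0).
  { assert (Hg0 : g <> e0) by (intros ->; apply Hg; exists e0; ring).
    assert (Heps0 : eps <> e0) by (intros ->; destruct Heps as [v Hv]; discriminate Hv).
    intros ->. revert Hprod. apply not_eq_sym.
    replace (e0 * B * C) with e0 by ring.
    repeat apply emul_neq0; try assumption. apply epow_neq0. discriminate. }
  destruct (lam_valuation A HA0) as [j [A' [-> HA']]].
  assert (Hval : epow lam j * (A' * B * C) = epow lam k * (eps * (g * g * g)))
    by (transitivity (epow lam j * A' * B * C); [ring | rewrite Hprod; ring]).
  apply lam_valuation_unique in Hval as [-> Hprod'];
    [| repeat apply lam_not_divides_mul; assumption
     | apply lam_not_divides_mul; [apply lam_not_divides_unit, Heps | apply lam_not_divides_cube, Hg]].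
  assert (HA'B : ecoprime A' B).
  { apply (ecoprime_of_combination _ _ A' B (epow lam k) e0 e0 e1 HAB); ring. }
  assert (HCA' : ecoprime C A').
  { apply (ecoprime_of_combination _ _ C A' e1 e0 e0 (epow lam k) HCA); ring. }
  destruct (ecoprime_unit_cube_factor A' B C g eps) as [ea [r [Hea ->]]];
    [exact Heps | exact HA'B | apply ecoprime_sym, HCA' | exact Hprod' |].
  destruct (ecoprime_unit_cube_factor B C (ea * (r * r * r)) g eps) as [eb [s [Heb ->]]];
    [exact Heps | exact HBC | apply ecoprime_sym, HA'B | rewrite <- Hprod'; ring |].
  destruct (ecoprime_unit_cube_factor C (ea * (r * r * r)) (eb * (s * s * s)) g eps)
    as [ec [t [Hec ->]]];
    [exact Heps | exact HCA' | apply ecoprime_sym, HBC | rewrite <- Hprod'; ring |].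
  exists ea, eb, ec, r, s, t.
  repeat split; try assumption.
  - intros Hr. apply HA'. apply edivides_mull. repeat apply edivides_mulr. exact Hr.
  - intros Hs. apply HB. apply edivides_mull. repeat apply edivides_mulr. exact Hs.
  - intros Ht. apply HC. apply edivides_mull. repeat apply edivides_mulr. exact Ht.
  - destruct HBC as [u [v Huv]]. exists (u * eb * s * s), (v * ec * t * t). rewrite <- Huv. ring.
Qed.

Lemma unit_cube_relation_normalize k ea eb ec r s t : eunit ea -> eunit eb -> eunit ec ->
  epow lam k * (ea * (r * r * r)) + omega * (eb * (s * s * s))
    + omega * omega * (ec * (t * t * t)) = e0 ->
  exists e f, eunit e /\ eunit f /\ s * s * s + e * (t * t * t) = f * epow lam k * (r * r * r).
Proof.
  intros Hea Heb Hec Hrel.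
  assert (Hwb : eunit (omega * eb)) by (apply eunit_mul; [apply eunit_enorm; reflexivity | exact Heb]).
  destruct Hwb as [f Hf].
  assert (Hfu : eunit f) by (exists (omega * eb); rewrite <- Hf; ring).
  exists (f * omega * omega * ec), (- (f * ea)). split; [| split].
  - repeat apply eunit_mul; try assumption; apply eunit_enorm; reflexivity.
  - replace (- (f * ea)) with ((- e1) * (f * ea)) by ring.
    apply eunit_mul; [apply eunit_enorm; reflexivity | apply eunit_mul; assumption].
  - transitivity (omega * eb * f * (s * s * s) + f * omega * omega * ec * (t * t * t));
      [rewrite Hf; ring |].
    transitivity (f * (epow lam k * (ea * (r * r * r)) + omega * (eb * (s * s * s))
                  + omega * omega * (ec * (t * t * t))) - f * (epow lam k * (ea * (r * r * r))));
      [ring |].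
    rewrite Hrel. ring.
Qed.

(* Both cubes are [±1] mod [lam^4] while the sum is [0] mod [lam^2], so
   [±1 ± e] is divisible by [lam^2]. *)
Lemma cube_sum_unit_sign k s t r e f : (2 <= k)%nat -> ~ edivides lam s -> ~ edivides lam t ->
  eunit e -> s * s * s + e * (t * t * t) = f * epow lam k * (r * r * r) -> is_sign e.
Proof.
  intros Hk Hs Ht He Hsum.
  destruct (cube_mod_lam4 s Hs) as [s1 [Hs1 [_ Hs1']]].
  destruct (cube_mod_lam4 t Ht) as [s2 [Hs2 [_ Hs2']]].
  assert (Hlam2 : forall x, edivides (epow lam 4) x -> edivides (lam * lam) x).
  { intros x [q ->]. exists (lam * lam * q). simpl. ring. }
  apply (eunit_sign_of_lam2 e s1 s2 He Hs1 Hs2).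
  replace (s1 + e * s2) with ((s * s * s + e * (t * t * t)) - (s * s * s - s1)
                              - e * (t * t * t - s2)) by ring.
  apply edivides_sub; [apply edivides_sub |].
  - rewrite Hsum. apply edivides_mulr, edivides_mull, lam2_divides_epow, Hk.
  - apply Hlam2, Hs1'.
  - apply edivides_mull, Hlam2, Hs2'.
Qed.

Lemma lam_triple_descent k A B C : (2 <= k)%nat -> lam_triple k A B C -> edivides lam A ->
  exists s t r, lam_cube_sum k s t r.
Proof.
  intros Hk Htri HA.
  destruct (lam_triple_cube_form k A B C Htri HA) as
    [ea [eb [ec [r [s [t [Hea [Heb [Hec [Hr [Hs [Ht [Hst [HA' [HB' HC']]]]]]]]]]]]]]].
  destruct Htri as [_ [_ [_ [Hrel _]]]]. rewrite HA', HB', HC' in Hrel.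
  destruct (unit_cube_relation_normalize k ea eb ec r s t Hea Heb Hec Hrel)
    as [e [f [He [Hf Hsum]]]].
  destruct (cube_sum_unit_sign k s t r e f Hk Hs Ht He Hsum) as [-> | ->].
  - exists s, t, r. repeat split; try assumption.
    exists f. split; [exact Hf | rewrite <- Hsum; ring].
  - exists s, (- t), r. repeat split; try assumption.
    + intros Hnt. apply Ht. replace t with ((- e1) * (- t)) by ring. apply edivides_mull, Hnt.
    + destruct Hst as [u [v Huv]]. exists u, (- v). rewrite <- Huv. ring.
    + exists f. split; [exact Hf | rewrite <- Hsum; ring].
Qed.

(* The cubes are [±1] mod [lam^4], and [lam] divides their sum, so the signs are opposite. *)
Lemma lam_cube_sum_signs m xi eta g : (1 <= m)%nat -> lam_cube_sum m xi eta g ->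
  exists s, edivides lam (xi - s) /\ edivides lam (eta + s) /\
    edivides (epow lam 4) (xi * xi * xi + eta * eta * eta).
Proof.
  intros Hm [Hxi [Heta [_ [_ [eps [_ Heq]]]]]].
  destruct (cube_mod_lam4 xi Hxi) as [s1 [Hs1 [Hs1a Hs1b]]].
  destruct (cube_mod_lam4 eta Heta) as [s2 [Hs2 [Hs2a Hs2b]]].
  assert (Hl4 : forall x, edivides (epow lam 4) x -> edivides lam x).
  { intros x [q ->]. exists (lam * lam * lam * q). simpl. ring. }
  assert (Hss : edivides lam (s1 + s2)).
  { replace (s1 + s2) with ((xi * xi * xi + eta * eta * eta) - (xi * xi * xi - s1)
                            - (eta * eta * eta - s2)) by ring.
    apply edivides_sub; [apply edivides_sub |]; [| apply Hl4, Hs1b | apply Hl4, Hs2b].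
    rewrite Heq. apply edivides_mulr, edivides_mull, lam_divides_epow, Hm. }
  assert (Hs21 : s2 = - s1).
  { destruct Hs1 as [-> | ->], Hs2 as [-> | ->]; try reflexivity; exfalso;
      [apply (sign_sum_not_lam e1) | apply (sign_sum_not_lam (- e1))];
      solve [assumption | left; reflexivity | right; reflexivity]. }
  subst s2. exists s1. split; [exact Hs1a | split].
  - replace (eta + s1) with (eta - - s1) by ring. exact Hs2a.
  - replace (xi * xi * xi + eta * eta * eta)
      with ((xi * xi * xi - s1) + (eta * eta * eta - - s1)) by ring.
    apply edivides_add; assumption.
Qed.

(* With [xi + eta = lam A]:  [xi^3 + eta^3 = lam^3 A (A - eta) (A + omega^2 eta)]. *)
Lemma lam_cube_sum_triple m xi eta g : (1 <= m)%nat -> lam_cube_sum m xi eta g ->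
  (4 <= m)%nat /\ exists A B C, lam_triple (m - 3) A B C.
Proof.
  intros Hm Hsum. destruct (lam_cube_sum_signs m xi eta g Hm Hsum) as [s [Hxs [Hes Hl4]]].
  destruct Hsum as [_ [_ [Hg [Hc [eps [Heps Heq]]]]]].
  assert (Hm4 : (4 <= m)%nat).
  { destruct (Nat.lt_ge_cases m 4) as [Hlt |]; [exfalso | assumption].
    destruct Hl4 as [q Hq].
    apply (lam_valuation_lt m 4 (eps * (g * g * g)) q Hlt).
    - apply lam_not_divides_mul; [apply lam_not_divides_unit, Heps | apply lam_not_divides_cube, Hg].
    - rewrite <- Hq, Heq. ring. }
  split; [exact Hm4 |].
  destruct (edivides_add Hxs Hes) as [A HA].
  assert (Hxi : xi = lam * A - eta) by (rewrite <- HA; ring). clear HA. subst xi.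
  exists A, (A - eta), (A + omega * omega * eta).
  split; [| split; [| split; [| split]]].
  - apply (ecoprime_of_combination _ _ A (A - eta) (- omega) e1 e1 (- e1) Hc); eis_compute.
  - apply (ecoprime_of_combination _ _ (A - eta) (A + omega * omega * eta)
             (- omega) e1 (omega * omega) (- (omega * omega)) Hc); eis_compute.
  - apply (ecoprime_of_combination _ _ (A + omega * omega * eta) A
             (- omega) e1 omega (- omega) Hc); eis_compute.
  - eis_compute.
  - exists eps, g. split; [exact Heps | split; [exact Hg |]].
    apply (ecancel (lam * lam * lam)); [discriminate |].
    transitivity ((lam * A - eta) * (lam * A - eta) * (lam * A - eta) + eta * eta * eta);
      [eis_compute |].
    rewrite Heq. replace m with (3 + (m - 3))%nat at 1 by lia. rewrite epow_add. simpl. ring.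
Qed.

Theorem lam_cube_sum_impossible m : (m mod 3 <> 1)%nat -> (1 <= m)%nat ->
  forall xi eta g, ~ lam_cube_sum m xi eta g.
Proof.
  induction m as [m IH] using (well_founded_induction lt_wf).
  intros Hm3 Hm1 xi eta g Hsum.
  destruct (lam_cube_sum_triple m xi eta g Hm1 Hsum) as [Hm4 [A [B [C Htri]]]].
  assert (Hm5 : (5 <= m)%nat) by (destruct (Nat.eq_dec m 4) as [-> |]; [simpl in Hm3 |]; lia).
  assert (Hmod : ((m - 3) mod 3 = m mod 3)%nat).
  { rewrite <- (Nat.Div0.mod_add (m - 3) 1 3). f_equal. lia. }
  assert (Hdesc : forall A B C, lam_triple (m - 3) A B C -> edivides lam A -> False).
  { intros A' B' C' Htri' HA'.
    destruct (lam_triple_descent (m - 3) A' B' C' ltac:(lia) Htri' HA') as [s [t [r Hst]]].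
    exact (IH (m - 3)%nat ltac:(lia) ltac:(rewrite Hmod; exact Hm3) ltac:(lia) s t r Hst). }
  assert (Hprod : edivides lam (A * B * C)).
  { destruct Htri as [_ [_ [_ [_ [eps [g' [_ [_ ->]]]]]]]].
    apply edivides_mulr, edivides_mull, lam_divides_epow. lia. }
  destruct (proj2 lam_prime _ _ Hprod) as [HAB | HC];
    [destruct (proj2 lam_prime _ _ HAB) as [HA | HB] |].
  - exact (Hdesc A B C Htri HA).
  - exact (Hdesc B C A (lam_triple_rotate _ _ _ _ Htri) HB).
  - exact (Hdesc C A B (lam_triple_rotate _ _ _ _ (lam_triple_rotate _ _ _ _ Htri)) HC).
Qed.

Corollary cube_sum_lam_power m xi eta g eps : (m mod 3 <> 1)%nat -> eunit eps ->
  ~ edivides lam xi -> ~ edivides lam eta -> ecoprime xi eta -> g <> e0 ->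
  (1 <= m)%nat \/ edivides lam g ->
  xi * xi * xi + eta * eta * eta <> eps * epow lam m * (g * g * g).
Proof.
  intros Hm3 Heps Hxi Heta Hc Hg0 Hm Heq.
  destruct (lam_valuation g Hg0) as [j [g' [-> Hg']]].
  assert (Hm1 : (1 <= m + j * 3)%nat).
  { destruct Hm as [| Hlg]; [lia |]. destruct j as [| j]; [| lia].
    exfalso. apply Hg'. simpl in Hlg. replace (e1 * g') with g' in Hlg by ring. exact Hlg. }
  apply (lam_cube_sum_impossible (m + j * 3) ltac:(rewrite Nat.Div0.mod_add; exact Hm3) Hm1
           xi eta g').
  repeat split; try assumption. exists eps. split; [exact Heps |].
  rewrite Heq. replace (m + j * 3)%nat with (m + j + j + j)%nat by lia.
  rewrite !epow_add. ring.
Qed.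

Close Scope eis_scope.

(** * Cube equations over the integers *)

Lemma rel_prime_of_bezout a b u v : u * a + v * b = 1 -> rel_prime a b.
Proof. intros H. apply bezout_rel_prime. exact (Bezout_intro _ _ _ u v H). Qed.

Lemma rel_prime_not_both p x y : prime p -> rel_prime x y -> (p | x) -> ~ (p | y).
Proof.
  intros Hp [_ _ Hgcd] Hx Hy. pose proof (prime_ge_2 p Hp).
  pose proof (Z.divide_pos_le p 1 ltac:(lia) (Hgcd p Hx Hy)). lia.
Qed.

Lemma prime_divides_cube p d : prime p -> (p | d * d * d) -> (p | d).
Proof. intros Hp H. repeat (apply prime_mult in H; [| exact Hp]; destruct H as [H | H]); exact H. Qed.

Lemma Zdivides_divide d x : divides Z.mul d x <-> (d | x).
Proof. split; intros [k ->]; exists k; ring. Qed.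

Lemma Zprime_element p : prime p -> prime_element 1 Z.mul p.
Proof.
  intros Hp. pose proof (prime_ge_2 p Hp). split.
  - intros [v Hv]. apply Z.eq_mul_1 in Hv. lia.
  - intros a b Hab. rewrite !Zdivides_divide in *. exact (prime_mult p Hp a b Hab).
Qed.

Lemma Z_prime_divisor_exists n : 1 < n -> exists p, prime p /\ (p | n).
Proof.
  induction n as [n IH] using (well_founded_induction (Z.lt_wf 0)). intros Hn.
  destruct (prime_dec n) as [Hpn | Hpn]; [exists n; split; [exact Hpn | apply Z.divide_refl] |].
  destruct (not_prime_divide n Hn Hpn) as [m [Hm Hmn]].
  destruct (IH m ltac:(lia) ltac:(lia)) as [p [Hpm Hpd]].
  exists p. split; [exact Hpm | eapply Z.divide_trans; eassumption].
Qed.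

Lemma Zprime_factor z : z <> 0 -> ~ is_unit 1 Z.mul z ->
  exists p z', prime_element 1 Z.mul p /\ z = p * z' /\ (Z.abs_nat z' < Z.abs_nat z)%nat.
Proof.
  intros Hz0 Hzu.
  assert (Hz1 : 1 < Z.abs z).
  { enough (z <> 1 /\ z <> -1) by lia.
    split; intros ->; apply Hzu; [exists 1 | exists (-1)]; reflexivity. }
  destruct (Z_prime_divisor_exists (Z.abs z) Hz1) as [p [Hp Hpz]].
  rewrite Z.divide_abs_r in Hpz. destruct Hpz as [z' ->].
  pose proof (prime_ge_2 p Hp).
  exists p, z'. split; [apply Zprime_element, Hp | split; [ring |]].
  apply Nat2Z.inj_lt. rewrite !Nat2Z.inj_abs_nat, Z.abs_mul.
  assert (z' <> 0) by (intros ->; lia). pose proof (Z.abs_pos z'). nia.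
Qed.

Lemma Zcube_factor c x y : rel_prime x y -> x * y = c * c * c -> exists d, x = d * d * d.
Proof.
  intros Hxy Heq. apply rel_prime_bezout in Hxy. destruct Hxy as [u v Huv].
  destruct (coprime_cube_factor Zth (fun x y => proj1 (Z.mul_eq_0 x y)) Zprime_factor
              (ex_intro _ u (ex_intro _ v Huv)) Heq) as [w [t [[w' Hw] ->]]].
  apply Z.eq_mul_1 in Hw. destruct Hw as [-> | ->]; [exists t | exists (- t)]; ring.
Qed.

Lemma cube_lt a b : a < b -> a * a * a < b * b * b.
Proof.
  intros H. assert (0 < b * b + a * b + a * a).
  { assert (4 * (b * b + a * b + a * a) = (2 * b + a) * (2 * b + a) + 3 * (a * a)) by ring.
    destruct (Z.eq_dec a 0) as [-> |]; [nia |]. assert (0 < a * a) by nia. nia. }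
  assert (b * b * b - a * a * a = (b - a) * (b * b + a * b + a * a)) by ring. nia.
Qed.

Lemma cube_lt_inv a b : a * a * a < b * b * b -> a < b.
Proof. intros H. destruct (Z.lt_ge_cases a b) as [| Hba]; [assumption |].
  destruct (Z.eq_dec a b) as [-> |]; [lia |]. pose proof (cube_lt b a ltac:(lia)). lia. Qed.

Lemma no_cube_between a d : a * a * a < d * d * d -> d * d * d < (a + 1) * (a + 1) * (a + 1) -> False.
Proof. intros H1 H2. apply cube_lt_inv in H1. apply cube_lt_inv in H2. lia. Qed.

Lemma cube_add1_cube y d : y * y * y + 1 = d * d * d -> y = 0 \/ y = -1.
Proof.
  intros H. destruct (Z.lt_trichotomy y 0) as [Hy | [Hy | Hy]]; [| left; exact Hy |].
  - destruct (Z.eq_dec y (-1)); [right; assumption |]. exfalso. apply (no_cube_between y d); nia.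
  - exfalso. apply (no_cube_between y d); nia.
Qed.

Lemma cube_sub1_cube y d : y * y * y - 1 = d * d * d -> y = 0 \/ y = 1.
Proof. intros H. destruct (cube_add1_cube (- y) (- d)); [nia | left; lia | right; lia]. Qed.

Lemma cube_add2_cube f g : g * g * g = f * f * f + 2 -> f = -1.
Proof.
  intros H. destruct (Z.eq_dec f (-1)); [assumption | exfalso].
  destruct (Z.eq_dec f 0) as [-> |]; [apply (no_cube_between 1 g); lia |].
  apply (no_cube_between f g); [lia |]. rewrite H. nia.
Qed.

Lemma cube_eq_sextic f g : g * g * g = f * f * f * f * f * f + f * f * f + 1 -> f = 0 \/ f = -1.
Proof.
  intros H. destruct (Z.lt_trichotomy f 0) as [Hf | [Hf | Hf]]; [| left; exact Hf |].
  - destruct (Z.eq_dec f (-1)); [right; assumption |]. exfalso.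
    apply (no_cube_between (f * f - 1) g).
    + rewrite H. assert (f <= -2) by lia. assert (f * f >= 4) by nia.
      assert (3 * (f * f) * (f * f - 1) + f * f * f + 2 > 0) by nia. nia.
    + rewrite H. assert (f * f * f < -1) by nia. nia.
  - exfalso. apply (no_cube_between (f * f) g).
    + rewrite H. assert (f * f * f > 0) by nia. nia.
    + rewrite H. assert (f * f * f < 3 * (f * f * f * f)) by nia. assert (0 < f * f) by nia. nia.
Qed.

Lemma not_both_quadratics_cubes_pos y f g : 0 < y ->
  f * f * f = y * y + y + 1 -> g * g * g = y * y - y + 1 -> False.
Proof.
  intros Hy Hf Hg.
  assert (g < f) by (apply cube_lt_inv; lia).
  assert (0 < g) by (apply cube_lt_inv; simpl; nia).
  assert ((g + 1) * (g + 1) * (g + 1) <= f * f * f)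
    by (destruct (Z.eq_dec (g + 1) f) as [<- |]; [lia | apply Z.lt_le_incl, cube_lt; lia]).
  assert (2 * y >= 3 * (g * g) + 3 * g + 1) by nia.
  assert (2 * (g * g * g) >= y * y) by nia.
  assert (4 * (y * y) >= 9 * (g * g * (g * g))) by nia.
  assert (8 * (g * g * g) >= 9 * (g * g * g * g)) by nia.
  nia.
Qed.

Lemma both_quadratics_cubes y f g :
  f * f * f = y * y + y + 1 -> g * g * g = y * y - y + 1 -> y = 0.
Proof.
  intros Hf Hg. destruct (Z.lt_trichotomy y 0) as [Hy | [Hy | Hy]]; [exfalso | exact Hy | exfalso].
  - apply (not_both_quadratics_cubes_pos (- y) g f); [lia | rewrite Hg; ring | rewrite Hf; ring].
  - exact (not_both_quadratics_cubes_pos y f g Hy Hf Hg).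
Qed.

Lemma cube_mod9 n : ~ (3 | n) -> exists t, n * n * n = 9 * t + 1 \/ n * n * n = 9 * t - 1.
Proof.
  intros Hn. pose proof (Z.div_mod n 9 ltac:(lia)) as Hd. pose proof (Z.mod_pos_bound n 9 ltac:(lia)).
  set (q := n / 9) in *. set (r := n mod 9) in *.
  assert (r <> 0 /\ r <> 3 /\ r <> 6) as (H0 & H3 & H6).
  { repeat split; intros E; apply Hn; rewrite Hd, E;
      [exists (3 * q) | exists (3 * q + 1) | exists (3 * q + 2)]; ring. }
  assert (r = 1 \/ r = 2 \/ r = 4 \/ r = 5 \/ r = 7 \/ r = 8) as Hr by lia.
  rewrite Hd. destruct Hr as [-> | [-> | [-> | [-> | [-> | ->]]]]];
    [exists (81 * q * q * q + 27 * q * q + 3 * q); left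
    | exists (81 * q * q * q + 54 * q * q + 12 * q + 1); right
    | exists (81 * q * q * q + 108 * q * q + 48 * q + 7); left
    | exists (81 * q * q * q + 135 * q * q + 75 * q + 14); right
    | exists (81 * q * q * q + 189 * q * q + 147 * q + 38); left
    | exists (81 * q * q * q + 216 * q * q + 192 * q + 57); right]; ring.
Qed.

Lemma ofZ_add a b : ofZ (a + b) = (ofZ a + ofZ b)%E.
Proof. reflexivity. Qed.

Lemma ofZ_mul a b : ofZ (a * b) = (ofZ a * ofZ b)%E.
Proof. cbv [ofZ emul fst snd]. f_equal; ring. Qed.

Lemma ecoprime_ofZ x y : rel_prime x y -> ecoprime (ofZ x) (ofZ y).
Proof.
  intros Hxy. apply rel_prime_bezout in Hxy. destruct Hxy as [u v H].
  exists (ofZ u), (ofZ v). rewrite <- !ofZ_mul, <- ofZ_add, H. reflexivity.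
Qed.

Lemma ofZ_cube_sum a b c : a * a * a + b * b * b = c ->
  (ofZ a * ofZ a * ofZ a + ofZ b * ofZ b * ofZ b)%E = ofZ c.
Proof. intros <-. rewrite <- !ofZ_mul, <- ofZ_add. reflexivity. Qed.

Lemma not_three_divides_of_cube_sum_one X b :
  X * X * X + (1 - X) * (1 - X) * (1 - X) = b * b * b -> ~ (3 | b).
Proof.
  intros H Hb. assert (H1 : (3 | 1)).
  { replace 1 with (b * b * b - 3 * (X * X - X)) by nia.
    apply Z.divide_sub_r; [apply Z.divide_mul_r; exact Hb | apply Z.divide_factor_l]. }
  apply Z.divide_1_r in H1. lia.
Qed.

(* In Z[omega] this reads [b^3 + (X - 1)^3 = X^3] with [lam | X]. *)
Lemma cube_sum_one_div3 X b :
  X * X * X + (1 - X) * (1 - X) * (1 - X) = b * b * b -> (3 | X) -> X = 0.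
Proof.
  intros H H3. destruct (Z.eq_dec X 0) as [| HX0]; [assumption | exfalso].
  assert (HX1 : ~ (3 | X - 1)).
  { intros H31. assert (H1 : (3 | 1)) by (replace 1 with (X - (X - 1)) by ring;
      apply Z.divide_sub_r; assumption).
    apply Z.divide_1_r in H1. lia. }
  apply (cube_sum_lam_power 0 (ofZ b) (ofZ (X - 1)) (ofZ X) e1).
  - discriminate.
  - exists e1. reflexivity.
  - rewrite lam_divides_ofZ. exact (not_three_divides_of_cube_sum_one X b H).
  - rewrite lam_divides_ofZ. exact HX1.
  - apply ecoprime_ofZ, (rel_prime_of_bezout _ _ (b * b) (-3 * X)). nia.
  - intros E. apply HX0. injection E. lia.
  - right. apply lam_divides_ofZ, H3.
  - rewrite (ofZ_cube_sum _ _ (X * X * X)) by nia. rewrite !ofZ_mul. simpl. ring.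
Qed.

Lemma cube_sum_one X b :
  X * X * X + (1 - X) * (1 - X) * (1 - X) = b * b * b -> X = 0 \/ X = 1.
Proof.
  intros H.
  destruct (classic (3 | X)) as [H3 | H3]; [left; exact (cube_sum_one_div3 X b H H3) |].
  destruct (classic (3 | 1 - X)) as [H4 | H4].
  { right. enough (1 - X = 0) by lia. apply (cube_sum_one_div3 (1 - X) b); [| exact H4].
    replace (1 - (1 - X)) with X by ring. lia. }
  destruct (cube_mod9 X H3) as [t1 Ht1]. destruct (cube_mod9 _ H4) as [t2 Ht2].
  destruct (cube_mod9 b (not_three_divides_of_cube_sum_one X b H)) as [t3 Ht3]. lia.
Qed.

(* [3 = (1 + omega) lam^2]: the exponent of [lam] is [2]. *)
Lemma cube_sum_three_cube v w u : rel_prime v w -> v * v * v + w * w * w = 3 * (u * u * u) -> u = 0.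
Proof.
  intros Hc H. destruct (Z.eq_dec u 0) as [| Hu0]; [assumption | exfalso].
  assert (Hother : forall a b, a * a * a + b * b * b = 3 * (u * u * u) -> (3 | a) -> (3 | b)).
  { intros a b Hab Ha. apply (prime_divides_cube 3 b prime_3).
    replace (b * b * b) with (3 * (u * u * u) - a * a * a) by lia.
    apply Z.divide_sub_r; [apply Z.divide_factor_l | repeat apply Z.divide_mul_l; exact Ha]. }
  assert (Hv : ~ (3 | v)).
  { intros Hv. exact (rel_prime_not_both 3 v w prime_3 Hc Hv (Hother v w H Hv)). }
  assert (Hw : ~ (3 | w)).
  { intros Hw. apply Hv. apply (Hother w v); [lia | exact Hw]. }
  apply (cube_sum_lam_power 2 (ofZ v) (ofZ w) (ofZ u) (e1 + omega)%E).
  - discriminate.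
  - exact eunit_1_omega.
  - rewrite lam_divides_ofZ. exact Hv.
  - rewrite lam_divides_ofZ. exact Hw.
  - apply ecoprime_ofZ, Hc.
  - intros E. apply Hu0. injection E. lia.
  - left. lia.
  - rewrite (ofZ_cube_sum _ _ _ H), ofZ_mul, three_lam2, !ofZ_mul. simpl. ring.
Qed.

(* [x1 / 3], [x2], [x3] are cubes [c1^3], [c2^3], [c3^3], and [c2^3 + c3^3 = 3 (-c1)^3]. *)
Lemma zero_sum_three_cube x1 x2 x3 al : x1 + x2 + x3 = 0 ->
  rel_prime x1 x2 -> rel_prime x2 x3 -> rel_prime x3 x1 ->
  x1 * x2 * x3 = 3 * (al * al * al) -> (3 | x1) -> al = 0.
Proof.
  intros Hsum H12 H23 H31 Hprod [y1 ->].
  assert (Hy : y1 * x2 * x3 = al * al * al) by lia.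
  assert (H1y : rel_prime y1 x2) by (apply (rel_prime_div (y1 * 3)); [exact H12 | exists 3; ring]).
  assert (H3y : rel_prime x3 y1)
    by (apply rel_prime_sym, (rel_prime_div (y1 * 3)); [apply rel_prime_sym, H31 | exists 3; ring]).
  destruct (Zcube_factor al y1 (x2 * x3)) as [c1 Hc1];
    [apply rel_prime_mult; [exact H1y | apply rel_prime_sym, H3y] | rewrite <- Hy; ring |].
  destruct (Zcube_factor al x2 (x3 * y1)) as [c2 Hc2];
    [apply rel_prime_mult; [exact H23 | apply rel_prime_sym, H1y] | rewrite <- Hy; ring |].
  destruct (Zcube_factor al x3 (y1 * x2)) as [c3 Hc3];
    [apply rel_prime_mult; [exact H3y | apply rel_prime_sym, H23] | rewrite <- Hy; ring |].
  assert (Hc23 : rel_prime c2 c3).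
  { apply (rel_prime_div x2); [| exists (c2 * c2); rewrite Hc2; ring].
    apply rel_prime_sym, (rel_prime_div x3);
      [apply rel_prime_sym, H23 | exists (c3 * c3); rewrite Hc3; ring]. }
  assert (Hc1' : - c1 = 0).
  { apply (cube_sum_three_cube c2 c3 (- c1) Hc23). rewrite <- Hc2, <- Hc3. nia. }
  assert (H0 : al * al * al = 0) by (rewrite <- Hy, Hc1; replace c1 with 0 by lia; ring).
  nia.
Qed.

(* The three terms [a], [-b], [b - a] sum to [0] and multiply to [a^2 b - a b^2]. *)
Lemma binary_cubic_three_cube a b be :
  a * a * a + b * b * b - 3 * (a * b * b) = 1 \/ a * a * a + b * b * b - 3 * (a * b * b) = -1 ->
  a * a * b - a * b * b = 3 * (be * be * be) -> be = 0.
Proof.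
  intros Hs Hk.
  assert (Hab : exists u v, u * a + v * b = 1).
  { destruct Hs as [Hs | Hs];
      [exists (a * a - 3 * (b * b)), (b * b) | exists (- (a * a - 3 * (b * b))), (- (b * b))]; nia. }
  destruct Hab as [u [v Huv]].
  assert (H12 : rel_prime a (- b)) by (apply (rel_prime_of_bezout _ _ u (- v)); lia).
  assert (H23 : rel_prime (- b) (b - a)) by (apply (rel_prime_of_bezout _ _ (- u - v) (- u)); lia).
  assert (H31 : rel_prime (b - a) a) by (apply (rel_prime_of_bezout _ _ v (u + v)); lia).
  assert (Hp : a * (- b) * (b - a) = 3 * (be * be * be)) by (rewrite <- Hk; ring).
  assert (H3 : (3 | a * (- b) * (b - a))) by (rewrite Hp; apply Z.divide_factor_l).
  apply (prime_mult 3 prime_3) in H3 as [H3 | H3];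
    [apply (prime_mult 3 prime_3) in H3 as [H3 | H3] |].
  - exact (zero_sum_three_cube a (- b) (b - a) be ltac:(ring) H12 H23 H31 Hp H3).
  - apply (zero_sum_three_cube (- b) (b - a) a be ltac:(ring) H23 H31 H12);
      [rewrite <- Hp; ring | exact H3].
  - apply (zero_sum_three_cube (b - a) a (- b) be ltac:(ring) H31 H12 H23);
      [rewrite <- Hp; ring | exact H3].
Qed.

Lemma ecube_pair a b : ((a, b) * (a, b) * (a, b))%E =
  (a * a * a + b * b * b - 3 * (a * b * b), 3 * (a * a * b - a * b * b)).
Proof. cbv [emul fst snd]. f_equal; ring. Qed.

(* In Z[omega], [y^2 - y + 1 = (y + omega) (y - 1 - omega)] with coprime factors, so
   [y + omega] is a unit times a cube [(a + b omega)^3]; the coefficient of [omega]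
   then forces the unit to be [±(1 + omega)] and [a^2 b - a b^2 = ± 3 al^3]. *)
Lemma nine_cube_quadratic_cube y al g :
  y - 1 = 9 * (al * al * al) -> y * y - y + 1 = g * g * g -> al = 0.
Proof.
  intros H1 H2. assert (Hy : y = 9 * (al * al * al) + 1) by lia.
  set (t := 3 * (al * al * al) * y).
  set (p := (y, 1) : eis). set (q := (y - 1, -1) : eis).
  destruct (ecoprime_cube_factor (ofZ g) p q) as [u [[a b] [Hu Hab]]].
  - exists (q + ofZ t * p - ofZ (2 * t) * q)%E, (ofZ t * q)%E.
    unfold t, p, q. rewrite Hy. eis_compute.
  - cbv [p q emul ofZ fst snd]. f_equal; [| ring].
    transitivity (y * y - y + 1); [ring | rewrite H2; ring].
  - rewrite ecube_pair in Hab.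
    destruct (eunit_cases u Hu) as [-> | [-> | [-> | [-> | [-> | ->]]]]];
      pose proof (f_equal fst Hab) as Ha; pose proof (f_equal snd Hab) as Hb; clear Hab;
      cbv [p emul fst snd] in Ha, Hb; try (exfalso; lia).
    + enough (- al = 0) by lia. apply (binary_cubic_three_cube a b); [left | ]; nia.
    + apply (binary_cubic_three_cube a b); [right |]; nia.
Qed.

(** * The equation [(2x)^6 - 1 = p^2 q^2 a^3] *)

Definition is_cube (n : Z) : Prop := exists d, n = d * d * d.

Lemma cube_of_prime_square_factor F G q e : prime q -> rel_prime F G ->
  F * G = q * q * (e * e * e) -> ~ (q | F) -> is_cube F.
Proof.
  intros Hq HFG H HqF. apply (Zcube_factor (q * e) F (G * q)).
  - apply rel_prime_mult; [exact HFG | apply rel_prime_sym, prime_rel_prime; assumption].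
  - transitivity ((F * G) * q); [ring | rewrite H; ring].
Qed.

Lemma cube_or_cube_of_prime_square F G q e : prime q -> rel_prime F G ->
  F * G = q * q * (e * e * e) -> is_cube F \/ is_cube G.
Proof.
  intros Hq HFG H. destruct (classic (q | F)) as [HqF | HqF].
  - right. apply (cube_of_prime_square_factor G F q e Hq (rel_prime_sym _ _ HFG));
      [rewrite <- H; ring | exact (rel_prime_not_both q F G Hq HFG HqF)].
  - left. exact (cube_of_prime_square_factor F G q e Hq HFG H HqF).
Qed.

Lemma succ_cube_factors_cube y q e : ~ (3 | y + 1) -> prime q ->
  y * y * y + 1 = q * q * (e * e * e) -> is_cube (y + 1) \/ is_cube (y * y - y + 1).
Proof.
  intros H3 Hq H. apply (cube_or_cube_of_prime_square _ _ q e Hq); [| rewrite <- H; ring].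
  destruct (rel_prime_bezout _ _ (prime_rel_prime 3 prime_3 (y + 1) H3)) as [a b Hab].
  apply (rel_prime_of_bezout _ _ (b - a * (y - 2)) a). nia.
Qed.

Lemma pred_cube_factors_cube y p d : ~ (3 | y - 1) -> prime p ->
  y * y * y - 1 = p * p * (d * d * d) -> is_cube (y - 1) \/ is_cube (y * y + y + 1).
Proof.
  intros H3 Hp H.
  destruct (succ_cube_factors_cube (- y) p (- d)) as [[f Hf] | [f Hf]].
  - intros H3'. apply H3. replace (y - 1) with (- (- y + 1)) by ring. apply Zdivide_opp_r, H3'.
  - exact Hp.
  - rewrite <- (Z.opp_involutive (y * y * y - 1)) in H. nia.
  - left. exists (- f). nia.
  - right. exists f. nia.
Qed.

Lemma cube_factors_small y : 1 < Z.abs y ->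
  is_cube (y - 1) \/ is_cube (y * y + y + 1) ->
  is_cube (y + 1) \/ is_cube (y * y - y + 1) -> False.
Proof.
  intros Hy [[f Hf] | [f Hf]] [[g Hg] | [g Hg]].
  - assert (f = -1) by (apply (cube_add2_cube f g); lia). subst. lia.
  - assert (Hf' : f = 0 \/ f = -1) by (apply (cube_eq_sextic f g); rewrite <- Hg;
      replace y with (f * f * f + 1) by lia; ring).
    destruct Hf' as [-> | ->]; lia.
  - assert (Hg' : - g = 0 \/ - g = -1) by (apply (cube_eq_sextic (- g) f); rewrite <- Hf;
      replace y with (g * g * g - 1) by lia; ring).
    assert (g = 0 \/ g = 1) as [-> | ->] by lia; lia.
  - pose proof (both_quadratics_cubes y f g ltac:(lia) ltac:(lia)). lia.
Qed.

Section CubePredOneModThree.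

Variable k : Z.
Let h := 3 * (k * k) + 3 * k + 1.

Lemma cube_pred_factor : (3 * k + 1) * (3 * k + 1) * (3 * k + 1) - 1 = 9 * k * h.
Proof. unfold h. ring. Qed.

Lemma rel_prime_cube_pred_factor : rel_prime k h.
Proof. apply (rel_prime_of_bezout _ _ (- 3 * (k + 1)) 1). unfold h. ring. Qed.

Lemma cube_pred_factor_cube : is_cube h -> k = 0 \/ k = -1.
Proof.
  intros [b Hb]. destruct (cube_sum_one (k + 1) b) as [E | E]; [| right; lia | left; lia].
  rewrite <- Hb. unfold h. ring.
Qed.

End CubePredOneModThree.

Lemma cube_pred_nine_cube_three k d : 3 * k + 1 <> 1 ->
  (3 * k + 1) * (3 * k + 1) * (3 * k + 1) - 1 = 3 * 3 * (d * d * d) -> k = -1.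
Proof.
  intros Hk1 H. rewrite cube_pred_factor in H.
  destruct (cube_pred_factor_cube k) as [-> | ->]; [| lia | reflexivity].
  apply (Zcube_factor d _ k); [apply rel_prime_sym, rel_prime_cube_pred_factor | lia].
Qed.

(* [3] divides [p^2 d^3 = 9 k h] but not [p] nor [h], so [3 | d] and [3 | k]. *)
Lemma cube_pred_nine_cube k p d : prime p -> p <> 3 -> 3 * k + 1 <> 1 ->
  (3 * k + 1) * (3 * k + 1) * (3 * k + 1) - 1 = p * p * (d * d * d) ->
  exists al, 3 * k = 9 * (al * al * al).
Proof.
  intros Hp Hp3 Hk1 H. rewrite cube_pred_factor in H.
  set (h := 3 * (k * k) + 3 * k + 1) in H.
  assert (Hh3 : ~ (3 | h)) by (intros [m Hm]; unfold h in Hm; lia).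
  assert (Hp3' : ~ (3 | p))
    by (intros H3p; apply Hp3; symmetry; exact (prime_div_prime 3 p prime_3 Hp H3p)).
  assert (H3d : (3 | d)).
  { apply (prime_divides_cube 3 d prime_3).
    assert (H3 : (3 | p * p * (d * d * d))) by (rewrite <- H; exists (3 * k * h); ring).
    apply (prime_mult 3 prime_3) in H3 as [H3 | H3]; [| exact H3].
    exfalso. apply (prime_mult 3 prime_3) in H3 as [H3 | H3]; contradiction. }
  destruct H3d as [d1 ->].
  assert (H3k : (3 | k)).
  { assert (H3 : (3 | k * h)) by (exists (p * p * (d1 * d1 * d1)); lia).
    apply (prime_mult 3 prime_3) in H3 as [H3 | H3]; [exact H3 | contradiction]. }
  destruct H3k as [k1 ->].
  assert (Hc : rel_prime k1 h).
  { apply (rel_prime_div (k1 * 3)); [apply rel_prime_cube_pred_factor | exists 3; ring]. }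
  destruct (cube_or_cube_of_prime_square k1 h p d1 Hp Hc ltac:(lia)) as [[al Hal] | Hcube].
  - exists al. lia.
  - destruct (cube_pred_factor_cube (k1 * 3) Hcube); lia.
Qed.

Lemma mixed_case_pred_div3 y p q d e : (3 | y - 1) -> y <> 1 -> prime p -> prime q ->
  y * y * y - 1 = p * p * (d * d * d) -> y * y * y + 1 = q * q * (e * e * e) -> False.
Proof.
  intros [k Hk] Hy1 Hp Hq HU HV.
  replace y with (3 * k + 1) in * by lia.
  destruct (Z.eq_dec p 3) as [-> | Hp3].
  - assert (Hkm : k = -1) by (apply (cube_pred_nine_cube_three k d Hy1); lia). subst k.
    assert (Hqq : (q * q | 7)) by (exists (- (e * e * e)); lia).
    pose proof (prime_ge_2 q Hq). pose proof (Z.divide_pos_le (q * q) 7 ltac:(lia) Hqq).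
    assert (q = 2) as -> by nia. destruct Hqq as [m Hm]. lia.
  - destruct (cube_pred_nine_cube k p d Hp Hp3 Hy1 HU) as [al Hal].
    destruct (succ_cube_factors_cube (3 * k + 1) q e) as [[g Hg] | [g Hg]];
      [intros [m Hm]; lia | exact Hq | exact HV | |].
    + assert (Hg3 : ~ (3 | g)).
      { intros H3g. assert (H3 : (3 | g * g * g)) by (repeat apply Z.divide_mul_l; exact H3g).
        destruct H3 as [m Hm]. lia. }
      destruct (cube_mod9 g Hg3) as [t Ht]. lia.
    + pose proof (nine_cube_quadratic_cube (3 * k + 1) al g ltac:(lia) ltac:(lia)). subst al. lia.
Qed.

Lemma mixed_case y p q d e : 1 < Z.abs y -> ~ (3 | y + 1) -> prime p -> prime q ->
  y * y * y - 1 = p * p * (d * d * d) -> y * y * y + 1 = q * q * (e * e * e) -> False.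
Proof.
  intros Hy H3 Hp Hq HU HV.
  pose proof (Z.div_mod y 3 ltac:(lia)) as Hdiv. pose proof (Z.mod_pos_bound y 3 ltac:(lia)) as Hbound.
  assert (Hmod : y mod 3 = 0 \/ y mod 3 = 1).
  { enough (y mod 3 <> 2) by lia. intros E. apply H3. exists (y / 3 + 1). lia. }
  destruct Hmod as [H0 | H1].
  - apply (cube_factors_small y Hy).
    + apply (pred_cube_factors_cube y p d); [intros [m Hm]; lia | exact Hp | exact HU].
    + apply (succ_cube_factors_cube y q e); assumption.
  - apply (mixed_case_pred_div3 y p q d e); try assumption; [exists (y / 3); lia | lia].
Qed.

Lemma prime_cofactor_square p U D : prime p -> p * U = D * D * D -> exists d, U = p * p * (d * d * d).
Proof.
  intros Hp H.
  destruct (prime_divides_cube p D Hp) as [d ->]; [rewrite <- H; apply Z.divide_factor_l |].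
  exists d. pose proof (prime_ge_2 p Hp). apply (Z.mul_reg_l _ _ p); [lia | rewrite H; ring].
Qed.

Lemma rel_prime_mult_mult a b c d : rel_prime a c -> rel_prime a d -> rel_prime b c ->
  rel_prime b d -> rel_prime (a * b) (c * d).
Proof.
  intros Hac Had Hbc Hbd.
  apply rel_prime_sym, rel_prime_mult; apply rel_prime_sym, rel_prime_mult; assumption.
Qed.

Lemma coprime_prime_square_parts U V p q a : rel_prime U V ->
  U * V = p * p * (q * q) * (a * a * a) -> prime p -> prime q -> (p | U) -> (q | V) ->
  exists d e, U = p * p * (d * d * d) /\ V = q * q * (e * e * e).
Proof.
  intros Hc H Hp Hq HpU HqV.
  pose proof (rel_prime_not_both p U V Hp Hc HpU) as HpV.
  pose proof (rel_prime_not_both q V U Hq (rel_prime_sym _ _ Hc) HqV) as HqU.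
  assert (Hpq : rel_prime p q).
  { apply prime_rel_prime; [exact Hp | intros Hd]. apply prime_div_prime in Hd; [| assumption..].
    subst. contradiction. }
  assert (Hcp : rel_prime (p * U) (q * V)).
  { apply rel_prime_mult_mult; [exact Hpq | apply prime_rel_prime; assumption
    | apply rel_prime_sym, prime_rel_prime; assumption | exact Hc]. }
  assert (Hcube : p * U * (q * V) = (p * q * a) * (p * q * a) * (p * q * a)).
  { transitivity (p * q * (U * V)); [ring | rewrite H; ring]. }
  destruct (Zcube_factor (p * q * a) (p * U) (q * V) Hcp Hcube) as [D HD].
  destruct (Zcube_factor (p * q * a) (q * V) (p * U) (rel_prime_sym _ _ Hcp)) as [E HE];
    [rewrite <- Hcube; ring |].
  destruct (prime_cofactor_square p U D Hp HD) as [d Hd].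
  destruct (prime_cofactor_square q V E Hq HE) as [e He].
  exists d, e. split; assumption.
Qed.

Lemma coprime_prime_square_cases U V p q a : rel_prime U V ->
  U * V = p * p * (q * q) * (a * a * a) -> prime p -> prime q ->
  is_cube U \/ is_cube V \/
  (exists d e, U = p * p * (d * d * d) /\ V = q * q * (e * e * e)) \/
  (exists d e, U = q * q * (d * d * d) /\ V = p * p * (e * e * e)).
Proof.
  intros Hc H Hp Hq.
  assert (HpUV : (p | U * V)) by (rewrite H; exists (p * (q * q) * (a * a * a)); ring).
  assert (HqUV : (q | U * V)) by (rewrite H; exists (p * p * q * (a * a * a)); ring).
  apply (prime_mult p Hp) in HpUV as [HpU | HpV]; apply (prime_mult q Hq) in HqUV as [HqU | HqV].
  - right; left. apply (Zcube_factor (p * q * a) V (U * p * q)).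
    + apply rel_prime_mult; [apply rel_prime_mult; [apply rel_prime_sym, Hc |] |];
        apply rel_prime_sym, prime_rel_prime; try assumption.
      * exact (rel_prime_not_both p U V Hp Hc HpU).
      * exact (rel_prime_not_both q U V Hq Hc HqU).
    + transitivity (U * V * p * q); [ring | rewrite H; ring].
  - right; right; left. exact (coprime_prime_square_parts U V p q a Hc H Hp Hq HpU HqV).
  - right; right; right. apply (coprime_prime_square_parts U V q p a Hc); try assumption.
    rewrite H. ring.
  - left. apply (Zcube_factor (p * q * a) U (V * p * q)).
    + apply rel_prime_mult; [apply rel_prime_mult; [exact Hc |] |];
        apply rel_prime_sym, prime_rel_prime; try assumption.
      * exact (rel_prime_not_both p V U Hp (rel_prime_sym _ _ Hc) HpV).
      * exact (rel_prime_not_both q V U Hq (rel_prime_sym _ _ Hc) HqV).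
    + transitivity (U * V * p * q); [ring | rewrite H; ring].
Qed.

Lemma no_coprime_solution y p q a : 1 < Z.abs y -> ~ (3 | y + 1) ->
  rel_prime (y * y * y - 1) (y * y * y + 1) -> prime p -> prime q ->
  (y * y * y - 1) * (y * y * y + 1) = p * p * (q * q) * (a * a * a) -> False.
Proof.
  intros Hy H3 Hc Hp Hq H.
  destruct (coprime_prime_square_cases _ _ p q a Hc H Hp Hq)
    as [[d Hd] | [[d Hd] | [[d [e [Hd He]]] | [d [e [Hd He]]]]]].
  - destruct (cube_sub1_cube y d Hd); lia.
  - destruct (cube_add1_cube y d Hd); lia.
  - exact (mixed_case y p q d e Hy H3 Hp Hq Hd He).
  - exact (mixed_case y q p d e Hy H3 Hq Hp Hd He).
Qed.

Lemma rel_prime_even_cube_pred_succ z :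
  rel_prime ((2 * z) * (2 * z) * (2 * z) - 1) ((2 * z) * (2 * z) * (2 * z) + 1).
Proof. apply (rel_prime_of_bezout _ _ (4 * (z * z * z)) (- (4 * (z * z * z) - 1))). ring. Qed.

Theorem corollary1 :
  ~ (exists x a p q : Z, prime p /\ prime q /\
       (2 * x) ^ 6 - 1 = p ^ 2 * q ^ 2 * a ^ 3).
Proof.
  intros [x [a [p [q [Hp [Hq H]]]]]].
  assert (Heq : forall z, z = x \/ z = - x ->
    ((2 * z) * (2 * z) * (2 * z) - 1) * ((2 * z) * (2 * z) * (2 * z) + 1)
    = p * p * (q * q) * (a * a * a)).
  { intros z [-> | ->]; (transitivity ((2 * x) ^ 6 - 1); [ring | rewrite H; ring]). }
  destruct (Z.eq_dec x 0) as [-> | Hx0].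
  { specialize (Heq 0 (or_introl eq_refl)). pose proof (prime_ge_2 p Hp).
    assert (Hpp : (p * p | 1)) by (exists (- (q * q * (a * a * a))); lia).
    pose proof (Z.divide_pos_le (p * p) 1 ltac:(lia) Hpp). nia. }
  assert (Hz : exists z, (z = x \/ z = - x) /\ ~ (3 | 2 * z + 1)).
  { destruct (classic (3 | 2 * x + 1)) as [[m Hm] | H3]; [| exists x; auto].
    exists (- x). split; [right; reflexivity | intros [m' Hm']; lia]. }
  destruct Hz as [z [Hzx H3]].
  apply (no_coprime_solution (2 * z) p q a); try assumption.
  - destruct Hzx as [-> | ->]; lia.
  - apply rel_prime_even_cube_pred_succ.
  - exact (Heq z Hzx).
Qed.
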